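(* Let $N\ge3$ and let $s=(x^1,\dots,x^m,\dots,x^{N-1},u,N)\in S^N\cap S_{nc}$ be a state with $c(G|s)=1$, $\widehat C(s)=C_m$, having the sure-capture property, and with $x^m\notin N(u)$. Then there exists a state $\tilde s=(x^1,\dots,\tilde x^m,\dots,x^{N-1},u,N)\in S^N\cap S_{nc}$, differing from $s$ only in the position of $C_m$, such that (i) $\tilde x^m\in N(u)$, (ii) $c(G|\tilde s)=1$, (iii) $\widehat C(\tilde s)=C_m$, and (iv) $\tilde s$ has the sure-capture property.
   Context: Board and moves: $G=(V,E)$ finite, simple, connected, undirected; $N(u)$ is the open neighbourhood of $u$. There are $N\ge3$ tokens, cops $C_1,\dots,C_{N-1}$ (tokens $1,\dots,N-1$) and robber $R$ (token $N$). A state is $s=(x^1,\dots,x^N,n)$ with $x^i\in V$ the position of token $i$ and $n$ the token to move; $S^n$ is the set of states with token $n$ to move; $s$ is a capture state if $x^i=x^N$ for some $i\le N-1$, and $S_{nc}$ is the set of noncapture states. In each turn the token to move moves to a vertex of its closed neighbourhood (may stay put); order $C_1,\dots,C_{N-1},R,C_1,\dots$; the game ends at the first capture. The modified cops-and-robber (CR) game is the two-player zero-sum game where one player controls all cops, the other the robber, and if capture occurs at time $t$ (number of turns) the robber's payoff is $-\gamma^t$ ($0$ if never), $\gamma\in(0,1)$. $\widehat\Sigma^n$ denotes the set of pure positional strategies of token $n$ that are components of optimal strategies in this game (CR-optimal strategies). For $s\in S_{nc}$, whenever CR-optimal play from $s$ leads to capture, it is always the same cop, denoted $\widehat C(s)$,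 that effects it. State cop number. For $s\in S_{nc}$, $c(G|s)=c_N(G|s)$ is the minimum $k\in\{1,\dots,N-1\}$ for which there exist $k$ cops and strategies for them such that, starting from $s$, a capture (by any cop) occurs whatever the other $N-k$ tokens (including $R$) do; $c(G|s)=\infty$ if no such $k$ exists. Say that a state $s\in S_{nc}$ with $c(G|s)=1$ and $\widehat C(s)=C_m$ has the sure-capture property if for every $\widehat\sigma^m\in\widehat\Sigma^m$ and every strategy profile $\sigma^{-m}$ of the other tokens, play from $s$ under $(\widehat\sigma^m,\sigma^{-m})$ ends in a capture in which $C_m$ is on the robber's vertex. *)

From Stdlib Require Import Reals ClassicalEpsilon.
From mathcomp Require Import all_boot.

Set Implicit Arguments.
Unset Strict Implicit.
Unset Printing Implicit Defensive.

Definition simple_connected_graph (V : finType) (e : rel V) : Prop :=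
  symmetric e /\ irreflexive e /\ (forall x y : V, connect e x y).

Section CR.
Variables (V : finType) (e : rel V).
(* N = n.+1 tokens, indexed by 'I_n.+1 : tokens 0 .. n-1 are the cops
   C_1 .. C_{N-1}, token n (= ord_max) is the robber R. *)
Variable n : nat.

Definition token := 'I_n.+1.
Definition robber : token := ord_max.
Definition is_cop (i : token) : bool := i != robber.

Definition state := ({ffun token -> V} * token)%type.
Definition position (s : state) (i : token) : V := s.1 i.
Definition turn (s : state) : token := s.2.

Definition captured (s : state) : bool :=
  [exists i : token, is_cop i && (position s i == position s robber)].

Definition closed_nbr (x y : V) : bool := (y == x) || e x y.

Definition strategy := state -> V.
Definition legal (i : token) (f : strategy) : Prop :=
  forall s : state, turn s = i -> closed_nbr (position s i) (f s).
Definition profile := token -> strategy.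
Definition legal_profile (p : profile) : Prop := forall i, legal i (p i).

(* one turn: the token to move moves, then the turn passes cyclically
   C_1, ..., C_{N-1}, R, C_1, ... *)
Definition step (p : profile) (s : state) : state :=
  ([ffun i => if i == turn s then p (turn s) s else position s i], ordS (turn s)).

Definition play (p : profile) (s : state) (t : nat) : state :=
  iter t (step p) s.

Definition capture_time (p : profile) (s : state) : option nat :=
  match excluded_middle_informative
          (exists t, (fun t => captured (play p s t)) t) with
  | left H => Some (ex_minn H)
  | right _ => None
  end.

Definition capture_at (p : profile) (s : state) (t : nat) : Prop :=
  captured (play p s t) /\ forall t', t' < t -> ~~ captured (play p s t').

Section Payoff.
Variable gamma : R.

Definition robber_payoff (p : profile) (s : state) : R :=
  match capture_time p s with
  | Some t => Ropp (pow gamma t)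
  | None => R0
  end.

(* CR-optimal profile: a saddle point of the zero-sum game (cops' player
   minimises, robber's player maximises the robber's payoff), from every
   initial state, against all (pure positional) deviations. *)
Definition CR_optimal (p : profile) : Prop :=
  legal_profile p /\
  forall s : state,
    (forall q : profile, legal_profile q ->
       (forall x, q robber x = p robber x) ->
       Rle (robber_payoff p s) (robber_payoff q s)) /\
    (forall q : profile, legal_profile q ->
       (forall i, is_cop i -> forall x, q i x = p i x) ->
       Rle (robber_payoff q s) (robber_payoff p s)).

Definition hatSigma (i : token) (f : strategy) : Prop :=
  exists p, CR_optimal p /\ forall x, p i x = f x.

(* \hat C(s) = C_m : CR-optimal play from s leads to capture, and whenever it
   does, cop m is the one that effects it (is on the robber's vertex). *)
Definition hatC_is (s : state) (m : token) : Prop :=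
  is_cop m /\
  (exists p, CR_optimal p /\ exists t, capture_at p s t) /\
  (forall p t, CR_optimal p -> capture_at p s t ->
     position (play p s t) m = position (play p s t) robber).

Definition sure_capture (s : state) (m : token) : Prop :=
  forall f, hatSigma m f ->
  forall p : profile, legal_profile p -> (forall x, p m x = f x) ->
    exists t, capture_at p s t /\
      position (play p s t) m = position (play p s t) robber.
End Payoff.

Definition guarantee_capture (K : {set token}) (s : state) : Prop :=
  exists pK : profile, (forall i, i \in K -> legal i (pK i)) /\
  forall p : profile, legal_profile p ->
    (forall i, i \in K -> forall x, p i x = pK i x) ->
    exists t, captured (play p s t).

Definition k_cops_capture (k : nat) (s : state) : Prop :=
  exists K : {set token}, #|K| = k /\ (forall i, i \in K -> is_cop i) /\
    guarantee_capture K s.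

Definition state_cop_number_is (s : state) (k : nat) : Prop :=
  1 <= k <= n /\ k_cops_capture k s /\
  forall k', 1 <= k' < k -> ~ k_cops_capture k' s.

End CR.

(* Let P0 be a CR-optimal profile and let cop m play P0 while every other token,
   the robber included, stays put.  By the sure-capture property cop m captures,
   and its capturing move onto the robber's vertex u starts from a neighbour of
   u; at the robber's turn just before that move cop m already stood there,
   while nobody else has moved.  This is the state s~.

   Sure capture passes from s to s~: against any continuation from s~ in which
   cop m follows a CR-optimal strategy, prefix the path from s to s~.  The
   resulting strategy of cop m is still CR-optimal, because all optimal
   profiles share the same capture time and any state-by-state mixture of
   optimal cop moves keeps it; and a play never revisits a state before capture,
   so the prefix and the continuation do not interfere.  Sure capture by cop m
   from s~ yields c(G|s~) = 1 and C^(s~) = C_m at once. *)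

From Stdlib Require Import Reals ClassicalEpsilon Classical Lra.
From mathcomp Require Import all_boot zify.

Set Implicit Arguments.
Unset Strict Implicit.
Unset Printing Implicit Defensive.

(* Capture times ordered with [None] (no capture) as the largest element. *)
Definition time_le (a b : option nat) : Prop :=
  if b is Some y then (if a is Some x then x <= y else False) else True.

Lemma time_le_refl a : time_le a a.
Proof. by case: a => /=. Qed.

Lemma time_le_trans a b c : time_le a b -> time_le b c -> time_le a c.
Proof. by case: a b c => [x|] [y|] [z|] //=; lia. Qed.

Lemma time_le_anti a b : time_le a b -> time_le b a -> a = b.
Proof. by case: a b => [x|] [y|] //= ? ?; congr Some; lia. Qed.

Lemma time_le_succ a b : time_le a b -> time_le (omap succn a) (omap succn b).
Proof. by case: a b => [x|] [y|]. Qed.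

Lemma cop_lt n (i : token n) : is_cop i -> i < n.
Proof. by rewrite /is_cop -(inj_eq val_inj) /= => ne_in; have := ltn_ord i; lia. Qed.

Section Plays.
Variables (V : finType) (n : nat).
Implicit Types (p q : profile V n) (s x : state V n).

Lemma playS p s k : play p s k.+1 = step p (play p s k).
Proof. exact: iterS. Qed.

Lemma playSr p s k : play p s k.+1 = play p (step p s) k.
Proof. exact: iterSr. Qed.

Lemma playD p s a b : play p s (a + b) = play p (play p s a) b.
Proof. by rewrite /play addnC iterD. Qed.

Lemma step_ext p q s : p (turn s) s = q (turn s) s -> step p s = step q s.
Proof. by rewrite /step => ->. Qed.

Lemma position_step p s i :
  position (step p s) i = if i == turn s then p (turn s) s else position s i.
Proof. by rewrite /position /step /= ffunE. Qed.

Lemma turn_play p s k : turn (play p s k) = (turn s + k) %% n.+1 :> nat.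
Proof.
elim: k => [|k IH]; first by rewrite addn0 modn_small.
by rewrite playS /= IH -addn1 modnDml -addnA addn1.
Qed.

Lemma turn_play_robber p s a d : turn s = robber n -> d <= n ->
  turn (play p s (a * n.+1 + d)) = (if d is d'.+1 then d' else n) :> nat.
Proof.
move=> turn_s le_dn; rewrite turn_play turn_s /= addnCA modnMDl.
case: d le_dn => [|d] le_dn; first by rewrite addn0 modn_small.
by rewrite addnS -addSn modnDl modn_small //; lia.
Qed.

Lemma last_robber_turn p s T i : turn s = robber n -> is_cop i ->
  turn (play p s T) = i ->
  exists2 L, L <= T & turn (play p s L) = robber n /\
    forall j, L <= j < T -> turn (play p s j) != i.
Proof.
move=> turn_s cop_i turn_T.
have [a [r [T_eq le_rn]]] : exists a r, T = a * n.+1 + r /\ r <= n.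
  by exists (T %/ n.+1), (T %% n.+1); rewrite -divn_eq -ltnS ltn_pmod.
subst T.
have := turn_play_robber p a turn_s le_rn; rewrite {}turn_T.
case: r le_rn => [|r] le_rn eq_ir; first by have := cop_lt cop_i; rewrite eq_ir ltnn.
exists (a * n.+1); first exact: leq_addr.
split=> [|j /andP [le_Lj lt_j]].
  by apply: val_inj; have := turn_play_robber p a turn_s (leq0n n); rewrite addn0.
have le_jr : j - a * n.+1 <= r by rewrite leq_subLR -ltnS -addnS.
rewrite -(subnKC le_Lj) -(inj_eq val_inj) /= turn_play_robber //; last first.
  exact: leq_trans le_jr (ltnW le_rn).
rewrite eq_ir; case: (j - _) le_jr => [|d] le_dr; first by rewrite neq_ltn le_rn orbT.
by rewrite neq_ltn le_dr.
Qed.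

Lemma position_play_idle p s i a b : a <= b ->
  (forall j, a <= j < b -> turn (play p s j) != i) ->
  position (play p s b) i = position (play p s a) i.
Proof.
move=> /subnKC <-; elim: (b - a) => [|k IH] idle; first by rewrite addn0.
rewrite addnS playS position_step.
have /negbTE -> : i != turn (play p s (a + k)) by rewrite eq_sym idle //; lia.
by apply: IH => j le_j; apply: idle; lia.
Qed.

Lemma play_agree p q s K :
  (forall j, j < K -> step p (play p s j) = step q (play p s j)) ->
  forall j, j <= K -> play q s j = play p s j.
Proof. by move=> agree; elim=> [|j IH] // lt_jK; rewrite !playS IH ?agree // ltnW. Qed.

Lemma capture_at_inj p s t t' : capture_at p s t -> capture_at p s t' -> t = t'.
Proof.
move=> [capt tmin] [capt' tmin']; case: (ltngtP t t') => // lt.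
- by move: (tmin' _ lt); rewrite capt.
- by move: (tmin _ lt); rewrite capt'.
Qed.

Lemma capture_timeP p s :
  match capture_time p s with
  | Some t => capture_at p s t
  | None => forall j, ~~ captured (play p s j)
  end.
Proof.
rewrite /capture_time; case: excluded_middle_informative => [ex|nex].
- case: (ex_minnP ex) => t capt tmin; split => // t' lt_t't.
  by apply/negP => /tmin; rewrite leqNgt lt_t't.
- by move=> j; apply/negP => capt; apply: nex; exists j.
Qed.

Lemma capture_time_at p s t : capture_at p s t -> capture_time p s = Some t.
Proof.
move=> capt; have := capture_timeP p s; case: capture_time => [t'|] capt'.
- by rewrite (capture_at_inj capt capt').
- by move: (capt' t); rewrite capt.1.
Qed.

Lemma capture_time_never p s :
  (forall j, ~~ captured (play p s j)) -> capture_time p s = None.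
Proof.
move=> never; have := capture_timeP p s; case: capture_time => [t [capt _]|] //.
by move: (never t); rewrite capt.
Qed.

Lemma capture_time0 p s : captured s -> capture_time p s = Some 0.
Proof. by move=> capt; apply: capture_time_at. Qed.

Lemma capture_time_step p s : ~~ captured s ->
  capture_time p s = omap succn (capture_time p (step p s)).
Proof.
move=> nc; have := capture_timeP p (step p s); case: capture_time => [t|] /=.
- move=> [capt tmin]; apply: capture_time_at; split; first by rewrite playSr.
  by case=> [|t'] // lt_t't; rewrite playSr; apply: tmin.
- by move=> never; apply: capture_time_never; case=> [|j] //; rewrite playSr.
Qed.

Lemma cycle_uncaptured p s a b : a < b -> play p s a = play p s b ->
  (forall j, j < b -> ~~ captured (play p s j)) -> forall j, ~~ captured (play p s j).
Proof.
move=> lt_ab same nc j; have d_gt0 : 0 < b - a by lia.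
have periodic k c : play p s (a + (k * (b - a) + c)) = play p s (a + c).
  elim: k => [|k IH] //; rewrite mulSn -addnA addnA playD (_ : a + (b - a) = b); last lia.
  by rewrite -same -playD.
case: (ltnP j a) => [lt_ja|le_aj]; first by apply: nc; lia.
rewrite -(subnKC le_aj) (divn_eq (j - a) (b - a)) periodic.
by apply: nc; have := ltn_pmod (j - a) d_gt0; lia.
Qed.

Lemma capture_at_play_inj p s t a b :
  capture_at p s t -> a < b <= t -> play p s a != play p s b.
Proof.
move=> [capt tmin] /andP [lt_ab le_bt]; apply/eqP => same.
have := cycle_uncaptured lt_ab same (fun j lt_jb => tmin j (leq_trans lt_jb le_bt)) t.
by rewrite capt.
Qed.

Lemma capture_at_agree p q s K t :
  (forall j, j <= K -> play q s j = play p s j) -> t <= K ->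
  capture_at p s t -> capture_at q s t.
Proof.
move=> agree le_tK [capt tmin]; split; first by rewrite agree.
by move=> t' lt_t't; rewrite agree ?tmin //; lia.
Qed.

(* Until [p]'s play first reaches [x] both plays coincide; from there [q]
   returns to [step q x] and cycles without capture. *)
Lemma capture_time_le_detour p q x : ~~ captured x ->
  (forall i w, w != x -> q i w = p i w) ->
  time_le (capture_time p (step q x)) (capture_time q (step q x)).
Proof.
move=> ncx qp; set z := step q x.
have agree K : (forall j, j < K -> play p z j != x) ->
    forall j, j <= K -> play q z j = play p z j.
  by move=> avoid; apply: play_agree => j /avoid /qp qp_j; apply: step_ext.
case: (classic (exists k, play p z k == x)) => [visit|avoid]; last first.
  have {}agree j : play q z j = play p z j.
    by apply: (agree j) => // k _; apply/negP => visit; apply: avoid; exists k.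
  have := capture_timeP p z; case: capture_time => [t Ht|never].
    by rewrite (capture_time_at (capture_at_agree (fun j _ => agree j) (leqnn t) Ht)) /=.
  by rewrite capture_time_never // => j; rewrite agree.
case: (ex_minnP visit) => k /eqP at_x kmin.
have first_k j : j < k -> play p z j != x.
  by move=> lt_jk; apply/negP => /kmin; rewrite leqNgt lt_jk.
have loop : (forall j, j <= k -> ~~ captured (play p z j)) -> capture_time q z = None.
  move=> nc; apply: capture_time_never.
  apply: (@cycle_uncaptured q z 0 k.+1) => // [|j lt_jk].
    by rewrite playS (agree k first_k k) // at_x.
  by rewrite (agree k first_k) ?nc //; lia.
have := capture_timeP p z; case: capture_time => [t Ht|never]; last by rewrite loop.
case: (ltnP k t) => [lt_kt|le_tk].
  by rewrite loop // => j le_jk; apply: Ht.2; lia.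
rewrite (capture_time_at (capture_at_agree (agree k first_k) le_tk Ht)) /=; lia.
Qed.

Lemma capture_time_descent p q x :
  (forall y, ~~ captured y ->
     time_le (omap succn (capture_time p (step q y))) (capture_time p y)) ->
  time_le (capture_time q x) (capture_time p x).
Proof.
move=> desc; case Ex: (capture_time p x) => [t|] //; rewrite -Ex.
have: time_le (capture_time p x) (Some t) by rewrite Ex /=.
elim: t x {Ex} => [|t IH] x le_xt;
  case: (boolP (captured x)) => [capt|ncx];
  try by rewrite (capture_time0 q capt) (capture_time0 p capt) /=.
all: have le_step := desc x ncx; rewrite [capture_time q x]capture_time_step //.
all: have := time_le_trans le_step le_xt.
all: case Ey: (capture_time p (step q x)) le_step => [t'|] le_step //= le_t't.
apply: time_le_trans (time_le_succ (IH _ _)) _; rewrite Ey //=; lia.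
Qed.

Lemma capture_time_ascent p q x :
  (forall y, ~~ captured y ->
     time_le (capture_time p y) (omap succn (capture_time p (step q y)))) ->
  time_le (capture_time p x) (capture_time q x).
Proof.
move=> asc; case Ex: (capture_time q x) => [t|] //; rewrite -Ex.
elim: t x Ex => [|t IH] x Ex; case: (boolP (captured x)) => [capt|ncx];
  try by rewrite (capture_time0 q capt) (capture_time0 p capt) /=.
all: move: Ex; rewrite [capture_time q x]capture_time_step //.
all: case Ey: (capture_time q (step q x)) => [t'|] // [eq_t't].
apply: time_le_trans (asc x ncx) _; rewrite -Ey.
by apply: time_le_succ; apply: IH; rewrite Ey eq_t't.
Qed.

End Plays.

Section Payoff.
Variables (gamma : R) (gamma_gt0 : Rlt R0 gamma) (gamma_lt1 : Rlt gamma R1).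

Lemma pow_gamma_gt0 k : Rlt 0 (pow gamma k).
Proof. exact: pow_lt. Qed.

Lemma pow_gamma_decr a b : a < b -> Rlt (pow gamma b) (pow gamma a).
Proof.
elim: b => [|b IH] //; rewrite ltnS leq_eqVlt => /orP [/eqP ->|lt_ab] /=;
  have := pow_gamma_gt0 b; [|have := IH lt_ab]; nra.
Qed.

Lemma robber_payoff_le V n (p q : profile V n) s s' :
  Rle (robber_payoff gamma p s) (robber_payoff gamma q s') <->
  time_le (capture_time p s) (capture_time q s').
Proof.
rewrite /robber_payoff; case: (capture_time q s') => [b|];
  case: (capture_time p s) => [a|] /=; split => // H.
- by rewrite leqNgt; apply/negP => /pow_gamma_decr; lra.
- by move: H; rewrite leq_eqVlt => /orP [/eqP ->|/pow_gamma_decr]; lra.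
- by have := pow_gamma_gt0 b; lra.
- by have := pow_gamma_gt0 a; lra.
- lra.
Qed.

End Payoff.

Section Optimality.
Variables (V : finType) (e : rel V) (n : nat) (gamma : R).
Hypotheses (gamma_gt0 : Rlt R0 gamma) (gamma_lt1 : Rlt gamma R1).
Implicit Types (P Q q : profile V n) (s x : state V n).

Lemma CR_optimal_cops_le P q s : CR_optimal e gamma P -> legal_profile e q ->
  (forall x, q (robber n) x = P (robber n) x) ->
  time_le (capture_time P s) (capture_time q s).
Proof.
by move=> [_ opt] q_legal q_rob; apply/(robber_payoff_le gamma_gt0 gamma_lt1);
  apply: (opt s).1.
Qed.

Lemma CR_optimal_robber_le P q s : CR_optimal e gamma P -> legal_profile e q ->
  (forall i, is_cop i -> forall x, q i x = P i x) ->
  time_le (capture_time q s) (capture_time P s).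
Proof.
by move=> [_ opt] q_legal q_cops; apply/(robber_payoff_le gamma_gt0 gamma_lt1);
  apply: (opt s).2.
Qed.

(* Pit the cops of one optimal profile against the robber of the other: each
   side does at least as well as in its own profile. *)
Lemma CR_optimal_capture_time P P0 s :
  CR_optimal e gamma P -> CR_optimal e gamma P0 -> capture_time P s = capture_time P0 s.
Proof.
have half A B : CR_optimal e gamma A -> CR_optimal e gamma B ->
    time_le (capture_time A s) (capture_time B s).
  move=> A_opt B_opt; pose Q : profile V n := fun i => if is_cop i then B i else A i.
  have Q_legal : legal_profile e Q.
    by move=> i; rewrite /Q; case: is_cop; [apply: B_opt.1 | apply: A_opt.1].
  apply: time_le_trans (CR_optimal_cops_le s A_opt Q_legal _) _.
    by move=> x; rewrite /Q /is_cop eqxx.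
  by apply: CR_optimal_robber_le => // i cop_i x; rewrite /Q cop_i.
by move=> P_opt P0_opt; apply: time_le_anti; apply: half.
Qed.

(* One-shot deviation: the profile that deviates from [P] only at [x] is no
   better for the robber, and after its first move it captures no earlier
   than [P] by [capture_time_le_detour]. *)
Lemma CR_optimal_robber_step P q x : CR_optimal e gamma P ->
  ~~ captured x -> turn x = robber n ->
  closed_nbr e (position x (robber n)) (q (robber n) x) ->
  time_le (omap succn (capture_time P (step q x))) (capture_time P x).
Proof.
move=> P_opt ncx turn_x legal_move.
pose Q : profile V n := fun i w =>
  if (i == robber n) && (w == x) then q (robber n) x else P i w.
have Q_legal : legal_profile e Q.
  move=> i w turn_w; rewrite /Q; case: andP => [[/eqP -> /eqP ->]|_] //.
  by apply: P_opt.1.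
have Q_step : step Q x = step q x by apply: step_ext; rewrite turn_x /Q !eqxx.
have Q_cops i : is_cop i -> forall w, Q i w = P i w.
  by move=> /negbTE cop_i w; rewrite /Q cop_i.
have := CR_optimal_robber_le x P_opt Q_legal Q_cops.
rewrite [capture_time Q x]capture_time_step // Q_step; apply: time_le_trans.
apply: time_le_succ; rewrite -Q_step; apply: capture_time_le_detour => // i w.
by move=> /negbTE w_x; rewrite /Q w_x andbF.
Qed.

(* Both profiles have the same capture time, which decreases by exactly one
   along any such mixture. *)
Lemma CR_optimal_mix P P0 P' : CR_optimal e gamma P -> CR_optimal e gamma P0 ->
  (forall i x, P' i x = P i x \/ is_cop i /\ P' i x = P0 i x) ->
  CR_optimal e gamma P'.
Proof.
move=> P_opt P0_opt mix.
have P'_legal : legal_profile e P'.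
  by move=> i x turn_x; case: (mix i x) => [->|[_ ->]];
    [apply: P_opt.1 | apply: P0_opt.1].
have P'_rob x : P' (robber n) x = P (robber n) x.
  by case: (mix (robber n) x) => [//|]; rewrite /is_cop eqxx => -[].
have P'_step x : ~~ captured x ->
    capture_time P x = omap succn (capture_time P (step P' x)).
  move=> ncx; case: (mix (turn x) x) => [eq_P|[_ eq_P0]].
    by rewrite (step_ext eq_P) capture_time_step.
  by rewrite (step_ext eq_P0) !(CR_optimal_capture_time _ P_opt P0_opt) capture_time_step.
have same s : capture_time P' s = capture_time P s.
  apply: time_le_anti; [apply: capture_time_descent | apply: capture_time_ascent].
    by move=> x ncx; rewrite (P'_step x ncx); apply: time_le_refl.
  by move=> x ncx; rewrite (P'_step x ncx); apply: time_le_refl.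
split=> // s; split=> q q_legal q_P';
  apply/(robber_payoff_le gamma_gt0 gamma_lt1); rewrite same.
  by apply: CR_optimal_cops_le => // x; rewrite q_P'.
apply: capture_time_descent => x ncx.
case: (eqVneq (turn x) (robber n)) => [turn_x|cop_turn].
  by apply: CR_optimal_robber_step => //; apply: q_legal.
by rewrite (P'_step x ncx) (@step_ext _ _ P' q) ?q_P' //; apply: time_le_refl.
Qed.

End Optimality.

Section SoloChase.
Variables (V : finType) (e : rel V) (n : nat) (P0 : profile V n) (m : token n).

Definition solo_chase : profile V n :=
  fun i w => if i == m then P0 m w else position w i.

Lemma solo_chase_legal : legal_profile e P0 -> legal_profile e solo_chase.
Proof.
move=> P0_legal i w turn_w; rewrite /solo_chase; case: eqP => [eq_im|_].
  by rewrite eq_im in turn_w *; apply: P0_legal.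
by rewrite /closed_nbr eqxx.
Qed.

Lemma solo_chase_position s k i : i != m ->
  position (play solo_chase s k) i = position s i.
Proof.
move=> /negbTE ne_im; elim: k => [|k IH] //; rewrite playS position_step.
by case: eqP => [<-|_]; rewrite /solo_chase ?ne_im.
Qed.

Lemma solo_chase_adjacent s T : legal_profile e P0 -> is_cop m ->
  turn s = robber n -> ~~ captured s -> capture_at solo_chase s T ->
  position (play solo_chase s T) m = position (play solo_chase s T) (robber n) ->
  exists2 L, L < T & turn (play solo_chase s L) = robber n /\
    e (position (play solo_chase s L) m) (position s (robber n)).
Proof.
move=> P0_legal m_cop turn_s ncs [capt tmin] m_at.
set u := position s (robber n).
have rob_pos k : position (play solo_chase s k) (robber n) = u.
  by apply: solo_chase_position; rewrite eq_sym.
have m_on_robber (w : state V n) : position w m = position w (robber n) -> captured w.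
  by move=> same; apply/existsP; exists m; rewrite m_cop same eqxx.
case: T capt tmin m_at => [|T] capt tmin m_at; first by case/negP: ncs.
set y := play solo_chase s T.
have ncy : ~~ captured y by apply: tmin.
have m_turn : turn y = m.
  apply/eqP; apply: contraNT ncy => ne_ym; apply: m_on_robber.
  by move: m_at; rewrite !rob_pos playS position_step eq_sym (negbTE ne_ym).
have m_move : P0 m y = u.
  by move: m_at; rewrite rob_pos playS position_step m_turn eqxx /solo_chase eqxx.
have adj : e (position y m) u.
  have := P0_legal m y m_turn; rewrite /closed_nbr m_move => /orP [/eqP same|//].
  by case/negP: ncy; apply: m_on_robber; rewrite rob_pos.
have [L le_LT [turn_L idle]] := last_robber_turn turn_s m_cop m_turn.
by exists L => //; rewrite -(position_play_idle le_LT idle).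
Qed.

End SoloChase.

Section SureCapture.
Variables (V : finType) (e : rel V) (n : nat) (gamma : R).
Hypotheses (gamma_gt0 : Rlt R0 gamma) (gamma_lt1 : Rlt gamma R1).
Variables (m : token n) (P0 : profile V n).
Hypotheses (m_cop : is_cop m) (P0_opt : CR_optimal e gamma P0).

Lemma sure_capture_hatC s : sure_capture e gamma s m -> hatC_is e gamma s m.
Proof.
move=> sure; split=> //; split.
  have [|t [capt _]] := sure (P0 m) _ P0 P0_opt.1 (fun _ => erefl).
    by exists P0.
  by exists P0; split=> //; exists t.
move=> p t p_opt capt.
have [|t' [capt' m_at]] := sure (p m) _ p p_opt.1 (fun _ => erefl).
  by exists p.
by rewrite (capture_at_inj capt capt').
Qed.

Lemma sure_capture_cop_number s : sure_capture e gamma s m -> state_cop_number_is e s 1.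
Proof.
move=> sure; split; first by have := cop_lt m_cop; lia.
split=> [|k]; last by lia.
exists [set m]; rewrite cards1; split=> //; split=> [i /set1P -> //|].
exists P0; split=> [i /set1P -> |p p_legal p_P0]; first exact: P0_opt.1.
have [|t [[capt _] _]] := sure (P0 m) _ p p_legal (p_P0 m (set11 m)).
  by exists P0.
by exists t.
Qed.

Lemma sure_capture_play (q : profile V n) s L :
  legal_profile e q -> (forall x, q m x = P0 m x) ->
  (forall t, t < L -> ~~ captured (play q s t)) ->
  sure_capture e gamma s m -> sure_capture e gamma (play q s L) m.
Proof.
move=> q_legal q_m nc_before sure f [P [P_opt P_f]] p p_legal p_f.
set s' := play q s L.
pose S : pred (state V n) := fun w => [exists k : 'I_L, play q s k == w].
pose p' : profile V n := fun i w => if S w then q i w else p i w.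
have p'_legal : legal_profile e p'.
  by move=> i w; rewrite /p'; case: (S w); [apply: q_legal | apply: p_legal].
have p'_m : hatSigma e gamma m (p' m).
  exists (fun i w => if (i == m) && S w then P0 i w else P i w); split.
    apply: (CR_optimal_mix gamma_gt0 gamma_lt1 P_opt P0_opt) => i w.
    by case: eqP => [->|_] /=; case: (S w); auto.
  by move=> w; rewrite /p' eqxx /=; case: (S w); rewrite ?q_m ?P_f ?p_f.
have [t [capt m_at]] := sure (p' m) p'_m p' p'_legal (fun _ => erefl).
have prefix k : k <= L -> play p' s k = play q s k.
  apply: play_agree => j lt_jL; apply: step_ext.
  by rewrite /p' (_ : S _ = true) //; apply/existsP; exists (Ordinal lt_jL).
have shift j : play p' s (L + j) = play p' s' j by rewrite playD prefix.
have le_Lt : L <= t.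
  rewrite leqNgt; apply/negP => lt_tL.
  by move: capt.1; rewrite prefix ?(ltnW lt_tL) // (negbTE (nc_before t lt_tL)).
have avoid j : L + j < t -> ~~ S (play p' s' j).
  move=> lt_t; apply/existsP => -[k /eqP visit].
  have lt_k : k < L + j <= t by have := ltn_ord k; lia.
  have := capture_at_play_inj capt lt_k.
  by rewrite shift -visit prefix ?eqxx // ltnW.
have suffix j : j <= t - L -> play p s' j = play p' s' j.
  apply: play_agree => i lt_i; apply: step_ext.
  by rewrite /p' (negbTE (avoid i _)) //; lia.
have t_eq : t = L + (t - L) by lia.
exists (t - L); split; last by rewrite suffix // -shift -t_eq.
apply: (capture_at_agree suffix (leqnn _)); split=> [|j lt_j].
  by rewrite -shift -t_eq capt.1.
by rewrite -shift; apply: capt.2; lia.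
Qed.

End SureCapture.

Theorem mainTheorem13
  (V : finType) (e : rel V) (Hg : simple_connected_graph e)
  (n : nat) (HN : 2 <= n) (* N = n.+1 >= 3 *)
  (gamma : R) (Hg0 : Rlt R0 gamma) (Hg1 : Rlt gamma R1)
  (s : state V n) (m : token n)
  (Hturn : turn s = robber n)
  (Hnc : ~~ captured s)
  (Hc : state_cop_number_is e s 1)
  (HC : hatC_is e gamma s m)
  (Hsure : sure_capture e gamma s m)
  (Hfar : ~~ e (position s m) (position s (robber n))) :
  exists s' : state V n,
    turn s' = robber n /\ ~~ captured s' /\
    (forall i, i != m -> position s' i = position s i) /\
    e (position s' m) (position s' (robber n)) /\
    state_cop_number_is e s' 1 /\
    hatC_is e gamma s' m /\
    sure_capture e gamma s' m.
Proof.
have [m_cop [[P0 [P0_opt _]] _]] := HC.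
set q := solo_chase P0 m.
have q_legal : legal_profile e q := solo_chase_legal m P0_opt.1.
have q_m x : q m x = P0 m x by rewrite /q /solo_chase eqxx.
have [|T [capt m_at]] := Hsure (P0 m) _ q q_legal q_m; first by exists P0.
have [L lt_LT [turn_L adj_L]] :=
  solo_chase_adjacent P0_opt.1 m_cop Hturn Hnc capt m_at.
have sure_L : sure_capture e gamma (play q s L) m.
  apply: (sure_capture_play Hg0 Hg1 m_cop P0_opt) => // t lt_tL.
  by apply: capt.2; apply: ltn_trans lt_LT.
exists (play q s L); split; first exact: turn_L.
split; first exact: capt.2 L lt_LT.
split; first by move=> i; apply: solo_chase_position.
split; first by rewrite [position _ (robber n)]solo_chase_position // eq_sym.
split; first exact: (sure_capture_cop_number m_cop P0_opt sure_L).
by split; first exact: (sure_capture_hatC m_cop P0_opt sure_L).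
Qed.
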